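(* The category $\mathcal J$ is isomorphic to Quillen's localization construction $\Sigma^{-1}\Sigma$ on the category $\Sigma$ of finite sets and bijections.
   Context: $\mathcal J$ is the category whose objects are pairs $(\mathbf n_1,\mathbf n_2)$ of finite sets $\mathbf n_i=\{1,\dots,n_i\}$, $n_i\ge0$. A morphism $(\mathbf m_1,\mathbf m_2)\to(\mathbf n_1,\mathbf n_2)$ is a triple $(\beta_1,\beta_2,\sigma)$ with $\beta_i\colon\mathbf m_i\to\mathbf n_i$ injective maps and $\sigma\colon\mathbf n_1\setminus\beta_1(\mathbf m_1)\to\mathbf n_2\setminus\beta_2(\mathbf m_2)$ a bijection. The composite of $(\alpha_1,\alpha_2,\rho)\colon(\mathbf l_1,\mathbf l_2)\to(\mathbf m_1,\mathbf m_2)$ and $(\beta_1,\beta_2,\sigma)$ is $(\beta_1\alpha_1,\beta_2\alpha_2,\tau)$ where $\tau(s)=\sigma(s)$ for $s\in\mathbf n_1\setminus\beta_1(\mathbf m_1)$ and $\tau(\beta_1(t))=\beta_2(\rho(t))$ for $t\in\mathbf m_1\setminus\alpha_1(\mathbf l_1)$. $\Sigma$ is the category with objects $\mathbf n$, $n\ge 0$, and bijections as morphisms, symmetric monoidal under concatenation $\sqcup$. $\Sigma^{-1}\Sigma$ (using the monoidal right action of $\Sigma$ on itself) has objects pairs $(\mathbf n_1,\mathbf n_2)$ of objects of $\Sigma$; a morphism $(\mathbf m_1,\mathbf m_2)\to(\mathbf n_1,\mathbf n_2)$ is an isomorphism class of pairs $(\mathbf l,(\alpha_1,\alpha_2))$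 with $\mathbf l$ an object of $\Sigma$ and $\alpha_i\colon\mathbf m_i\sqcup\mathbf l\to\mathbf n_i$ bijections, where $(\mathbf l,(\alpha_1,\alpha_2))\sim(\mathbf l,(\alpha_1',\alpha_2'))$ if there is $\sigma\in\Sigma(\mathbf l,\mathbf l)$ with $\alpha_i'\circ(1_{\mathbf m_i}\sqcup\sigma)=\alpha_i$ for $i=1,2$; composition of $[\mathbf l,(\alpha_1,\alpha_2)]$ followed by $[\mathbf l',(\beta_1,\beta_2)]$ is $[\mathbf l\sqcup\mathbf l',(\beta_i\circ(\alpha_i\sqcup 1_{\mathbf l'}))_i]$. *)

(* Concrete presentations of the categories J and
   Sigma^{-1}Sigma, with objects pairs of natural numbers (n1, n2),
   standing for ( {1..n1}, {1..n2} ) = ('I_n1, 'I_n2). *)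
From mathcomp Require Import all_boot.
Set Implicit Arguments. Unset Strict Implicit. Unset Printing Implicit Defensive.

Definition Ob := (nat * nat)%type.

(* A morphism (m1,m2) -> (n1,n2) is a triple (beta1, beta2, sigma);
   the bijection sigma : n1 \ beta1(m1) -> n2 \ beta2(m2) is encoded by its
   graph as a finite function s : 'I_n1 -> option 'I_n2 with
   s x = Some (sigma x) for x outside the image of beta1 and s x = None on
   that image (so the encoding is canonical and Leibniz equality of raw
   data is equality of triples). *)
Definition Jhom (a b : Ob) : Type :=
  ({ffun 'I_a.1 -> 'I_b.1} * {ffun 'I_a.2 -> 'I_b.2}
   * {ffun 'I_b.1 -> option 'I_b.2})%type.

Definition Jvalid (a b : Ob) (f : Jhom a b) : Prop :=
  let '(b1, b2, s) := f in
  injective b1 /\ injective b2 /\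
  (forall x, s x = None <-> x \in codom b1) /\
  (forall x y, s x = Some y -> y \notin codom b2) /\
  (forall x x' y, s x = Some y -> s x' = Some y -> x = x') /\
  (forall y, y \notin codom b2 -> exists x, s x = Some y).

Definition Jid (a : Ob) : Jhom a a :=
  ([ffun i => i], [ffun i => i], [ffun _ => None]).

Definition Jcomp (a b c : Ob) (f : Jhom a b) (g : Jhom b c) : Jhom a c :=
  let '(a1, a2, r) := f in
  let '(b1, b2, s) := g in
  ([ffun i => b1 (a1 i)], [ffun i => b2 (a2 i)],
   [ffun x => match s x with
              | Some y => Some y
              | None => match [pick t | b1 t == x] with
                        | Some t => match r t with
                                    | Some y => Some (b2 y)
                                    | None => None
                                    end
                        | None => None
                        end
              end]).

(* concatenation m |_| l is 'I_(m + l) (first m, then l) *)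
Definition sumid (m l l' : nat) (sg : 'I_l -> 'I_l') : 'I_(m + l) -> 'I_(m + l') :=
  fun i => match split i with
           | inl j => lshift l' j
           | inr k => rshift m (sg k)
           end.

Definition sumfst (m n l l' : nat) (al : 'I_(m + l) -> 'I_n) :
  'I_(m + l + l') -> 'I_(n + l') :=
  fun i => match split i with
           | inl j => lshift l' (al j)
           | inr k => rshift n k
           end.

(* raw representatives (l, (alpha1, alpha2)) *)
Definition SHom (a b : Ob) : Type :=
  {l : nat & (('I_(a.1 + l) -> 'I_b.1) * ('I_(a.2 + l) -> 'I_b.2))%type}.

Definition Svalid (a b : Ob) (x : SHom a b) : Prop :=
  bijective (projT2 x).1 /\ bijective (projT2 x).2.

(* (l,(al1,al2)) ~ (l',(al1',al2')) iff there is a bijection sg : l -> l'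
   with al_i' o (1 |_| sg) = al_i  (a bijection 'I_l -> 'I_l' forces l = l') *)
Definition Seqv (a b : Ob) (x y : SHom a b) : Prop :=
  exists sg : 'I_(projT1 x) -> 'I_(projT1 y),
    [/\ bijective sg,
        (forall i, (projT2 y).1 (sumid sg i) = (projT2 x).1 i)
      & (forall i, (projT2 y).2 (sumid sg i) = (projT2 x).2 i)].

Definition Sid (a : Ob) : SHom a a :=
  existT _ 0 (fun i => cast_ord (addn0 a.1) i, fun i => cast_ord (addn0 a.2) i).

(* [l,(al1,al2)] followed by [l',(be1,be2)] is
   [l |_| l', (be_i o (al_i |_| 1_l'))_i] *)
Definition Scomp (a b c : Ob) (x : SHom a b) (y : SHom b c) : SHom a c :=
  existT _ (projT1 x + projT1 y)
   (fun i => (projT2 y).1 (@sumfst a.1 b.1 (projT1 x) (projT1 y) (projT2 x).1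
                                  (cast_ord (addnA a.1 (projT1 x) (projT1 y)) i)),
    fun i => (projT2 y).2 (@sumfst a.2 b.2 (projT1 x) (projT1 y) (projT2 x).2
                                  (cast_ord (addnA a.2 (projT1 x) (projT1 y)) i))).

From mathcomp Require Import all_boot.
From Stdlib Require Import ClassicalEpsilon.
Set Implicit Arguments. Unset Strict Implicit. Unset Printing Implicit Defensive.

(* The isomorphism is most naturally written in the direction
   Sigma^{-1}Sigma -> J.  A representative (l, (al1, al2)) of a morphism
   (m1, m2) -> (n1, n2) yields the injections beta_i := al_i restricted to m_i
   and the bijection sigma := al2 o al1^{-1} from n1 \ beta1(m1) = al1(l) onto
   n2 \ beta2(m2) = al2(l).  Two representatives give the same triple exactly
   when they differ by a permutation of l; every triple arises, taking for l an
   enumeration of n1 \ beta1(m1); and since composition in Sigma^{-1}Sigma only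
   concatenates the l's, the assignment is compatible with identities and
   composites.  Any section of this bijection on hom-sets, chosen by Hilbert's
   epsilon, is then the required functor J -> Sigma^{-1}Sigma. *)

Lemma split_lshift m n (j : 'I_m) : split (lshift n j) = inl j.
Proof. exact: (unsplitK (inl _ j)). Qed.

Lemma split_rshift m n (k : 'I_n) : split (rshift m k) = inr k.
Proof. exact: (unsplitK (inr _ k)). Qed.

Lemma lshift_neq_rshift m n (j : 'I_m) (k : 'I_n) : lshift n j <> rshift m k.
Proof. by move/eqP; rewrite eq_lrshift. Qed.

Lemma ord_sum_ind m n (P : 'I_(m + n) -> Prop) :
  (forall j, P (lshift n j)) -> (forall k, P (rshift m k)) -> forall i, P i.
Proof. by move=> Pl Pr i; case: (split_ordP i) => [j|k] ->. Qed.

Lemma bij_ind (A B : Type) (f : A -> B) : bijective f ->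
  forall P : B -> Prop, (forall x, P (f x)) -> forall y, P y.
Proof. by case=> g _ fK P Pf y; rewrite -(fK y). Qed.

Lemma inj_onto_bij (A B : finType) (f : A -> B) :
  injective f -> (forall y, exists x, f x = y) -> bijective f.
Proof.
move=> inj_f onto_f; have [g fg] := fin_all_exists onto_f.
by exists g => // x; apply: inj_f; rewrite fg.
Qed.

Definition ord_join m k n (f : 'I_m -> 'I_n) (g : 'I_k -> 'I_n) (i : 'I_(m + k)) :=
  match split i with inl j => f j | inr j => g j end.

Lemma ord_join_lshift m k n (f : 'I_m -> 'I_n) (g : 'I_k -> 'I_n) j :
  ord_join f g (lshift k j) = f j.
Proof. by rewrite /ord_join split_lshift. Qed.

Lemma ord_join_rshift m k n (f : 'I_m -> 'I_n) (g : 'I_k -> 'I_n) j :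
  ord_join f g (rshift m j) = g j.
Proof. by rewrite /ord_join split_rshift. Qed.

Lemma ord_join_bij m k n (f : 'I_m -> 'I_n) (g : 'I_k -> 'I_n) :
  injective f -> injective g -> (forall i j, f i <> g j) ->
  (forall z, (exists i, f i = z) \/ (exists j, g j = z)) ->
  bijective (ord_join f g).
Proof.
move=> inj_f inj_g fg_disj fg_cover; apply: inj_onto_bij.
  apply: ord_sum_ind => [i|j]; apply: ord_sum_ind => [i'|j'];
    rewrite !(ord_join_lshift, ord_join_rshift).
  - by move/inj_f ->.
  - by move/fg_disj.
  - by move/esym/fg_disj.
  - by move/inj_g ->.
move=> z; case: (fg_cover z) => [[i <-]|[j <-]].
  by exists (lshift k i); rewrite ord_join_lshift.
by exists (rshift m j); rewrite ord_join_rshift.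
Qed.

Lemma sumid_lshift m l l' (sg : 'I_l -> 'I_l') j :
  sumid sg (lshift l j) = lshift l' j :> 'I_(m + l').
Proof. by rewrite /sumid split_lshift. Qed.

Lemma sumid_rshift m l l' (sg : 'I_l -> 'I_l') k :
  sumid sg (rshift m k) = rshift m (sg k).
Proof. by rewrite /sumid split_rshift. Qed.

Lemma sumfst_lshift m n l l' (al : 'I_(m + l) -> 'I_n) i :
  @sumfst _ _ _ l' al (lshift l' i) = lshift l' (al i).
Proof. by rewrite /sumfst split_lshift. Qed.

Lemma sumfst_rshift m n l l' (al : 'I_(m + l) -> 'I_n) (k : 'I_l') :
  @sumfst _ _ _ l' al (rshift (m + l) k) = rshift n k.
Proof. by rewrite /sumfst split_rshift. Qed.

Lemma sumfst_bij m n l l' (al : 'I_(m + l) -> 'I_n) :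
  bijective al -> bijective (@sumfst _ _ _ l' al).
Proof.
move=> bij_al; have [al' _ alK] := bij_al.
change (bijective (ord_join (fun i => lshift l' (al i)) (@rshift n l'))).
apply: ord_join_bij.
- by move=> i i' /lshift_inj /(bij_inj bij_al).
- exact: rshift_inj.
- by move=> i j; apply: lshift_neq_rshift.
- apply: ord_sum_ind => [y|j]; last by right; exists j.
  by left; exists (al' y); rewrite alK.
Qed.

Lemma cast_addnA_ll m l l' (j : 'I_m) :
  cast_ord (addnA m l l') (lshift (l + l') j) = lshift l' (lshift l j).
Proof. exact: val_inj. Qed.

Lemma cast_addnA_rl m l l' (k : 'I_l) :
  cast_ord (addnA m l l') (rshift m (lshift l' k)) = lshift l' (rshift m k).
Proof. exact: val_inj. Qed.

Lemma cast_addnA_rr m l l' (k : 'I_l') :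
  cast_ord (addnA m l l') (rshift m (rshift l k)) = rshift (m + l) k.
Proof. by apply: val_inj => /=; rewrite addnA. Qed.

Section SigmaToJ.
Variables a b : Ob.

Definition compl_of_shom (x : SHom a b) (z : 'I_b.1) : option 'I_b.2 :=
  omap (fun k => (projT2 x).2 (rshift a.2 k))
       [pick k | (projT2 x).1 (rshift a.1 k) == z].

Definition jhom_of_shom (x : SHom a b) : Jhom a b :=
  ([ffun j => (projT2 x).1 (lshift _ j)], [ffun j => (projT2 x).2 (lshift _ j)],
   [ffun z => compl_of_shom x z]).

Variables (l : nat) (al1 : 'I_(a.1 + l) -> 'I_b.1) (al2 : 'I_(a.2 + l) -> 'I_b.2).
Let x : SHom a b := existT _ l (al1, al2).

Lemma compl_of_shom_lshift j : injective al1 -> compl_of_shom x (al1 (lshift l j)) = None.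
Proof.
move=> inj_al1; rewrite /compl_of_shom; case: pickP => [k /eqP/inj_al1 E|//].
by case: (lshift_neq_rshift (esym E)).
Qed.

Lemma compl_of_shom_rshift k : injective al1 ->
  compl_of_shom x (al1 (rshift a.1 k)) = Some (al2 (rshift a.2 k)).
Proof.
move=> inj_al1; rewrite /compl_of_shom; case: pickP => [k' /eqP/inj_al1/rshift_inj -> //|].
by move/(_ k); rewrite eqxx.
Qed.

Lemma compl_of_shom_Some z y : compl_of_shom x z = Some y ->
  exists k, al1 (rshift a.1 k) = z /\ al2 (rshift a.2 k) = y.
Proof. by rewrite /compl_of_shom; case: pickP => //= k /eqP <- [<-]; exists k. Qed.

End SigmaToJ.

Lemma jhom_of_shom_valid a b (x : SHom a b) : Svalid x -> Jvalid (jhom_of_shom x).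
Proof.
case: x => l [al1 al2] [bij1 bij2] /=.
have inj1 := bij_inj bij1; have inj2 := bij_inj bij2.
have Hl j := compl_of_shom_lshift al2 j inj1.
have Hr k := compl_of_shom_rshift al2 k inj1.
split; [|split; [|split; [|split; [|split]]]].
- by move=> j j' /eqP; rewrite !ffunE => /eqP /inj1 /lshift_inj.
- by move=> j j' /eqP; rewrite !ffunE => /eqP /inj2 /lshift_inj.
- apply: (bij_ind bij1); apply: ord_sum_ind => [j|k]; rewrite ffunE.
  + by rewrite Hl; split => // _; apply/codomP; exists j; rewrite ffunE.
  + rewrite Hr; split => // /codomP [j]; rewrite ffunE => /inj1 E.
    by case: (lshift_neq_rshift (esym E)).
- apply: (bij_ind bij1); apply: ord_sum_ind => [j|k] y; rewrite ffunE ?Hl // Hr.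
  move=> [<-]; apply/codomP => [[j]]; rewrite ffunE => /inj2 E.
  by case: (lshift_neq_rshift (esym E)).
- apply: (bij_ind bij1); apply: ord_sum_ind => [j|k];
    apply: (bij_ind bij1); apply: ord_sum_ind => [j'|k'] y; rewrite !ffunE ?Hl ?Hr //.
  by move=> [<-] [/inj2 /rshift_inj ->].
- apply: (bij_ind bij2); apply: ord_sum_ind => [j|k].
  + by move/codomP => []; exists j; rewrite ffunE.
  + by move=> _; exists (al1 (rshift a.1 k)); rewrite ffunE Hr.
Qed.

Lemma Seqv_jhom_of_shom a b (x y : SHom a b) : Svalid x -> Svalid y ->
  Seqv x y -> jhom_of_shom x = jhom_of_shom y.
Proof.
case: x y => l [al1 al2] [l' [be1 be2]]; rewrite /Svalid /Seqv /=.
move=> [bij1 _] [/bij_inj inj1' _] [sg [_ E1 E2]].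
have inj1 := bij_inj bij1.
have L1 j : be1 (lshift l' j) = al1 (lshift l j) by rewrite -E1 sumid_lshift.
have L2 j : be2 (lshift l' j) = al2 (lshift l j) by rewrite -E2 sumid_lshift.
have R1 k : be1 (rshift a.1 (sg k)) = al1 (rshift a.1 k) by rewrite -E1 sumid_rshift.
have R2 k : be2 (rshift a.2 (sg k)) = al2 (rshift a.2 k) by rewrite -E2 sumid_rshift.
rewrite /jhom_of_shom /=; congr (_, _, _); apply/ffunP => z; rewrite !ffunE ?L1 ?L2 //.
move: z; apply: (bij_ind bij1); apply: ord_sum_ind => [j|k].
- by rewrite (compl_of_shom_lshift al2 j inj1) -L1 (compl_of_shom_lshift be2 j inj1').
- rewrite (compl_of_shom_rshift al2 k inj1) -R1.
  by rewrite (compl_of_shom_rshift be2 (sg k) inj1') R2.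
Qed.

Lemma jhom_of_shom_inj a b (x y : SHom a b) : Svalid x -> Svalid y ->
  jhom_of_shom x = jhom_of_shom y -> Seqv x y.
Proof.
case: x y => l [al1 al2] [l' [be1 be2]]; rewrite /Svalid /=.
move=> [bij1 _] [bij1' _] [/ffunP L1 /ffunP L2 /ffunP C].
have inj1 := bij_inj bij1; have inj1' := bij_inj bij1'.
have {}C z : compl_of_shom (existT _ l' (be1, be2) : SHom a b) z =
             compl_of_shom (existT _ l (al1, al2) : SHom a b) z.
  by have := C z; rewrite !ffunE.
have to_l' k : exists k', be1 (rshift a.1 k') = al1 (rshift a.1 k) /\
                          be2 (rshift a.2 k') = al2 (rshift a.2 k).
  by apply: compl_of_shom_Some; rewrite C compl_of_shom_rshift.
have to_l k' : exists k, al1 (rshift a.1 k) = be1 (rshift a.1 k').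
  have [k [Ek _]] : exists k, al1 (rshift a.1 k) = be1 (rshift a.1 k') /\
                              al2 (rshift a.2 k) = be2 (rshift a.2 k').
    by apply: compl_of_shom_Some; rewrite -C compl_of_shom_rshift.
  by exists k.
have [sg sgP] := fin_all_exists to_l'.
exists sg; split => /=.
- apply: inj_onto_bij => [k1 k2 E|k'].
    by apply/rshift_inj/inj1; rewrite -(sgP k1).1 -(sgP k2).1 E.
  have [k Ek] := to_l k'; exists k.
  by apply/rshift_inj/inj1'; rewrite (sgP k).1.
- apply: ord_sum_ind => [j|k]; rewrite ?sumid_lshift ?sumid_rshift ?(sgP k).1 //.
  by have := L1 j; rewrite !ffunE.
- apply: ord_sum_ind => [j|k]; rewrite ?sumid_lshift ?sumid_rshift ?(sgP k).2 //.
  by have := L2 j; rewrite !ffunE.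
Qed.

Lemma Seqv_jhom_of_shomE a b (x y : SHom a b) : Svalid x -> Svalid y ->
  Seqv x y <-> jhom_of_shom x = jhom_of_shom y.
Proof.
by move=> vx vy; split; [apply: Seqv_jhom_of_shom | apply: jhom_of_shom_inj].
Qed.

Lemma Jid_valid a : Jvalid (Jid a).
Proof.
split; [|split; [|split; [|split; [|split]]]].
- by move=> i j; rewrite !ffunE.
- by move=> i j; rewrite !ffunE.
- by move=> x; rewrite ffunE; split => // _; apply/codomP; exists x; rewrite ffunE.
- by move=> x y; rewrite ffunE.
- by move=> x x' y; rewrite ffunE.
- by move=> y /codomP []; exists y; rewrite ffunE.
Qed.

Lemma Sid_valid a : Svalid (Sid a).
Proof. by split; exists (cast_ord (esym (addn0 _))) => i; apply: val_inj. Qed.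

Lemma jhom_of_Sid a : jhom_of_shom (Sid a) = Jid a.
Proof.
rewrite /jhom_of_shom /Jid /=; congr (_, _, _); apply/ffunP => z; rewrite !ffunE.
- exact: val_inj.
- exact: val_inj.
- by rewrite /compl_of_shom; case: pickP => // [[]].
Qed.

Lemma Scomp_valid a b c (x : SHom a b) (y : SHom b c) :
  Svalid x -> Svalid y -> Svalid (Scomp x y).
Proof.
case: x y => l [al1 al2] [l' [be1 be2]]; rewrite /Svalid /= => [[bij1 bij2] [bij1' bij2']].
have cast_bij n m (e : n = m) : bijective (cast_ord e).
  by exists (cast_ord (esym e)); [apply: cast_ordK | apply: cast_ordKV].
split; apply: bij_comp => //.
  exact: bij_comp (sumfst_bij _ bij1) (cast_bij _ _ _).
exact: bij_comp (sumfst_bij _ bij2) (cast_bij _ _ _).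
Qed.

Lemma jhom_of_Scomp a b c (x : SHom a b) (y : SHom b c) : Svalid x -> Svalid y ->
  jhom_of_shom (Scomp x y) = Jcomp (jhom_of_shom x) (jhom_of_shom y).
Proof.
move=> vx vy; have /= [bij_xy _] := Scomp_valid vx vy.
case: x y vx vy bij_xy => l [al1 al2] [l' [be1 be2]].
rewrite /Svalid /= => [[/bij_inj inj1 _] [/bij_inj inj1' _]] bij_xy.
rewrite /jhom_of_shom /Jcomp /=; congr (_, _, _); apply/ffunP => z; rewrite !ffunE.
- by rewrite cast_addnA_ll sumfst_lshift.
- by rewrite cast_addnA_ll sumfst_lshift.
move: z; apply: (bij_ind bij_xy); apply: ord_sum_ind => [j|].
- rewrite (compl_of_shom_lshift _ _ (bij_inj bij_xy)) cast_addnA_ll sumfst_lshift.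
  rewrite (compl_of_shom_lshift be2 _ inj1').
  case: pickP => [t /eqP|/(_ (al1 (lshift l j)))]; last by rewrite ffunE eqxx.
  by rewrite ffunE => /inj1' /lshift_inj ->; rewrite ffunE (compl_of_shom_lshift al2 j inj1).
apply: ord_sum_ind => [k|k'].
- rewrite (compl_of_shom_rshift _ _ (bij_inj bij_xy)) /= !cast_addnA_rl !sumfst_lshift.
  rewrite (compl_of_shom_lshift be2 _ inj1').
  case: pickP => [t /eqP|/(_ (al1 (rshift a.1 k)))]; last by rewrite ffunE eqxx.
  by rewrite !ffunE => /inj1' /lshift_inj ->; rewrite (compl_of_shom_rshift al2 k inj1) ffunE.
- rewrite (compl_of_shom_rshift _ _ (bij_inj bij_xy)) /= !cast_addnA_rr !sumfst_rshift.
  by rewrite (compl_of_shom_rshift be2 k' inj1').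
Qed.

Lemma jhom_of_shom_onto a b (f : Jhom a b) :
  Jvalid f -> exists x : SHom a b, Svalid x /\ jhom_of_shom x = f.
Proof.
case: f => [[b1 b2] s] [inj_b1 [inj_b2 [s_None [s_compl [s_inj s_onto]]]]].
pose D := [set z | s z != None].
pose e := @enum_val _ (mem D).
have s_e_Some k : exists y, s (e k) = Some y.
  by have := enum_valP k; rewrite inE; case: (s (e k)) => // y _; exists y.
have [w s_e] := fin_all_exists s_e_Some.
have bij1 : bijective (ord_join b1 e).
  apply: ord_join_bij => //; first exact: enum_val_inj.
  - move=> j k E; have : s (b1 j) = None by apply/s_None/codomP; exists j.
    by rewrite E s_e.
  - move=> z; case Ez: (s z) => [y|].
      have zD : z \in D by rewrite inE Ez.
      by right; exists (enum_rank_in zD z); rewrite /e enum_rankK_in.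
    have /codomP [j ->] : z \in codom b1 by apply/s_None.
    by left; exists j.
have bij2 : bijective (ord_join b2 w).
  apply: ord_join_bij => //.
  - move=> k k' E; apply: enum_val_inj; apply: (s_inj _ _ (w k)) => //.
    by rewrite E.
  - by move=> j k E; have := s_compl _ _ (s_e k); rewrite -E codom_f.
  - move=> y; case: (boolP (y \in codom b2)) => [/codomP [j ->]|/s_onto [z Ez]].
      by left; exists j.
    have zD : z \in D by rewrite inE Ez.
    right; exists (enum_rank_in zD z).
    by have := s_e (enum_rank_in zD z); rewrite /e enum_rankK_in // Ez => [[]].
exists (existT _ #|D| (ord_join b1 e, ord_join b2 w)); split; first by [].
rewrite /jhom_of_shom /=; congr (_, _, _); apply/ffunP => z; rewrite !ffunE ?ord_join_lshift //.
move: z; apply: (bij_ind bij1); apply: ord_sum_ind => [j|k].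
- rewrite (compl_of_shom_lshift _ j (bij_inj bij1)) ord_join_lshift.
  by symmetry; apply/s_None/codomP; exists j.
- by rewrite (compl_of_shom_rshift _ k (bij_inj bij1)) !ord_join_rshift s_e.
Qed.

Definition shom_of_jhom a b (f : Jhom a b) : SHom a b :=
  epsilon (inhabits (existT _ 0 (fun i => f.1.1 (cast_ord (addn0 a.1) i),
                                  fun i => f.1.2 (cast_ord (addn0 a.2) i))))
          (fun x => Svalid x /\ jhom_of_shom x = f).

Lemma shom_of_jhomK a b (f : Jhom a b) :
  Jvalid f -> Svalid (shom_of_jhom f) /\ jhom_of_shom (shom_of_jhom f) = f.
Proof. by move=> vf; apply: (epsilon_spec _ _ (jhom_of_shom_onto vf)). Qed.

Theorem proposition4p3 :
  exists (F0 : Ob -> Ob) (F : forall a b : Ob, Jhom a b -> SHom (F0 a) (F0 b)),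
    bijective F0 /\
        (forall a b (f : Jhom a b), Jvalid f -> Svalid (F a b f)) /\
        (forall a b (f g : Jhom a b), Jvalid f -> Jvalid g ->
            (Seqv (F a b f) (F a b g) <-> f = g)) /\
        (forall a b (h : SHom (F0 a) (F0 b)), Svalid h ->
            exists f : Jhom a b, Jvalid f /\ Seqv (F a b f) h) /\
        (forall a, Seqv (F a a (Jid a)) (Sid (F0 a))) /\
        (forall a b c (f : Jhom a b) (g : Jhom b c), Jvalid f -> Jvalid g ->
            Seqv (F a c (Jcomp f g)) (Scomp (F a b f) (F b c g))).
Proof.
exists id, shom_of_jhom; split; first by exists id.
split; first by move=> a b f /shom_of_jhomK [].
split.
  move=> a b f g /shom_of_jhomK [vf ef] /shom_of_jhomK [vg eg].
  by rewrite Seqv_jhom_of_shomE // ef eg.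
split.
  move=> a b h vh; have vGh := jhom_of_shom_valid vh.
  have [vf ef] := shom_of_jhomK vGh.
  by exists (jhom_of_shom h); rewrite Seqv_jhom_of_shomE // ef.
split.
  move=> a; have [vf ef] := shom_of_jhomK (Jid_valid a).
  by rewrite /= Seqv_jhom_of_shomE ?ef ?jhom_of_Sid //; apply: Sid_valid.
move=> a b c f g /shom_of_jhomK [vf ef] /shom_of_jhomK [vg eg].
have vfg := Scomp_valid vf vg.
have Efg : jhom_of_shom (Scomp (shom_of_jhom f) (shom_of_jhom g)) = Jcomp f g.
  by rewrite jhom_of_Scomp // ef eg.
have /shom_of_jhomK [vc ec] : Jvalid (Jcomp f g).
  by rewrite -Efg; apply: jhom_of_shom_valid.
by rewrite Seqv_jhom_of_shomE // ec Efg.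
Qed.
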